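(* Let $n\ge1$, $\mathcal{D}=\{u\in(0,1)^n:\sum_{i=1}^nu_i<1\}$, $u_0=1-\sum_{i=1}^nu_i$, and let $q_{ij}\ge0$, $r_{ij}=r_{ji}\ge0$ ($i,j=0,\ldots,n$) be constants with $q_{i0}=q_{0i}=r_{i0}=r_{ii}=0$. Define $q_i(u)=\sum_{j=1}^nq_{ij}u_j$, $r_i(u)=\sum_{j=1}^nr_{ij}u_j$ and, for $i,j=1,\ldots,n$, $$A_{ij}(u)=(q_i(u)-r_i(u))\delta_{ij}+u_i\Big(q_{ij}-q_j(u)+r_{ij}+r_j(u)-\sum_{\ell=1}^nu_\ell(q_{\ell j}+r_{\ell j})\Big),$$ $$(h_B''(u))_{ij}=\frac{\delta_{ij}}{u_i}+\frac1{u_0}.$$ Assume the symmetric part of $(q_{ij}+r_{ij})_{i,j=1}^n$ is positive definite with smallest eigenvalue $\alpha>0$ and $q_{ij}\ge r_{ij}$ for $i,j=1,\ldots,n$. Then $z^Th_B''(u)A(u)z\ge\alpha|z|^2$ for all $u\in\mathcal{D}$ and $z\in\mathbb{R}^n$.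
   Context: $A(u)$ is the diffusion matrix of the multiphase cross-diffusion system with unit drag coefficients written in the variables $u_1,\ldots,u_n$, and $h_B''(u)$ is the Hessian of the Boltzmann entropy density $h_B(u)=\sum_{i=0}^nu_i(\log u_i-1)$ with $u_0=1-\sum_{i=1}^nu_i$. *)

From mathcomp Require Import all_boot all_order all_algebra.
From mathcomp Require Import reals.
Set Implicit Arguments. Unset Strict Implicit. Unset Printing Implicit Defensive.
Import Order.TTheory GRing.Theory Num.Theory.
Local Open Scope ring_scope.

(* Indices 1..n of the paper are represented by 'I_n (paper index i = val i + 1). *)

Section Defs.
Variables (R : realType) (n : nat).

Definition u0 (u : 'I_n -> R) : R := 1 - \sum_(i < n) u i.

Definition inD (u : 'I_n -> R) : Prop :=
  (forall i, 0 < u i /\ u i < 1) /\ \sum_(i < n) u i < 1.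

Definition lin (q : 'M[R]_n) (u : 'I_n -> R) (i : 'I_n) : R :=
  \sum_(j < n) q i j * u j.

Definition Amat (q r : 'M[R]_n) (u : 'I_n -> R) : 'M[R]_n :=
  \matrix_(i, j)
    ((lin q u i - lin r u i) * (i == j)%:R
     + u i * (q i j - lin q u j + r i j + lin r u j
              - \sum_(l < n) u l * (q l j + r l j))).

Definition hessB (u : 'I_n -> R) : 'M[R]_n :=
  \matrix_(i, j) ((i == j)%:R / u i + 1 / u0 u).

Definition sympart (M : 'M[R]_n) : 'M[R]_n := 2^-1 *: (M + M^T).

End Defs.

From mathcomp Require Import all_boot all_order all_algebra.
From mathcomp Require Import reals complex ring.

(* Dividing A_ij(u) by u_i and adding the column sum
     sum_k A_kj(u) = u_0 (q_j(u) - r_j(u) + sum_l u_l (q_lj + r_lj))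
   divided by u_0 leaves  h_B''(u) A(u) = diag((q_i(u) - r_i(u)) / u_i) + q + r.
   The diagonal part is nonnegative since q >= r, and z^T (q + r) z is the
   quadratic form of the symmetric part of q + r, hence at least alpha |z|^2. *)

Set Implicit Arguments.
Unset Strict Implicit.
Unset Printing Implicit Defensive.

Import Order.TTheory GRing.Theory Num.Theory.
Local Open Scope ring_scope.
Local Open Scope sesquilinear_scope.

Section ComplexForms.
Variables (C : numClosedFieldType) (n : nat).

Lemma cV_form_diag (d : 'rV[C]_n) (v : 'cV_n) :
  (v^t* *m diag_mx d *m v) 0 0 = \sum_i `|v i 0| ^+ 2 * d 0 i.
Proof.
rewrite mxE; apply: eq_bigr => i _.
by rewrite mul_mx_diag !mxE normCK mulrAC [_^* * _]mulrC.
Qed.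

Lemma cV_form_norm (v : 'cV[C]_n) : (v^t* *m v) 0 0 = \sum_i `|v i 0| ^+ 2.
Proof. by rewrite mxE; apply: eq_bigr => i _; rewrite !mxE normCK mulrC. Qed.

Lemma unitarymx_form (P : 'M[C]_n) (w : 'cV_n) :
  P \is unitarymx -> (P *m w)^t* *m (P *m w) = w^t* *m w.
Proof.
move=> /unitarymxP/mulmx1C PtP.
by rewrite trmx_mul map_mxM -mulmxA (mulmxA _ P) PtP mul1mx.
Qed.

Variable A : 'M[C]_n.
Hypothesis A_normal : A \is normalmx.

Let P := spectralmx A.
Let d := spectral_diag A.
Let P_unitary : P \is unitarymx := spectral_unitarymx A.
Let A_spectral : A = P^t* *m diag_mx d *m P.
Proof. by rewrite -invmx_unitary //; apply/orthomx_spectralP. Qed.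

Lemma spectral_diag_eigenvalue i : eigenvalue A (d 0 i).
Proof.
have P_unit : P \in unitmx by exact: unitarymx_unit.
apply/eigenvalueP; exists (row i P).
  rewrite -row_mul [X in _ *m X]A_spectral -invmx_unitary // !mulmxA mulmxV // mul1mx.
  by rewrite row_mul row_diag_mx -scalemxAl -rowE.
rewrite rowE mulmx_free_eq0 ?row_free_unit //.
by apply/eqP => /matrixP/(_ 0 i)/eqP; rewrite !mxE !eqxx oner_eq0.
Qed.

Lemma normalmx_form_ge (a : C) (w : 'cV_n) : (forall i, a <= d 0 i) ->
  a * (w^t* *m w) 0 0 <= (w^t* *m A *m w) 0 0.
Proof.
move=> a_le_d; rewrite -(unitarymx_form w P_unitary) cV_form_norm.
have -> : w^t* *m A *m w = (P *m w)^t* *m diag_mx d *m (P *m w).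
  by rewrite A_spectral trmx_mul map_mxM !mulmxA.
rewrite cV_form_diag mulr_sumr; apply: ler_sum => i _.
by rewrite mulrC ler_wpM2l ?exprn_ge0.
Qed.

End ComplexForms.

(* The real spectral theorem, obtained from the complex one for S seen as a
   Hermitian matrix over R[i]. *)
Lemma symmetric_form_ge (R : rcfType) n (S : 'M[R]_n) (alpha : R) :
  S^T = S -> (forall a, eigenvalue S a -> alpha <= a) ->
  forall z : 'cV_n, alpha * \sum_i z i 0 ^+ 2 <= (z^T *m S *m z) 0 0.
Proof.
move=> S_sym alpha_min z.
pose toC : {rmorphism R -> R[i]} := real_complex R.
have toC_conj x : (toC x)^* = toC x by apply/CrealP/complex_realP; exists x.
pose A := S ^ toC; pose zc := z ^ toC.
have A_herm : A \is hermsymmx.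
  apply/is_hermitianmxP; rewrite expr0 scale1r.
  by apply/matrixP => i j; rewrite !mxE toC_conj -[in LHS]S_sym mxE.
have zc_conj : zc^t* = zc^T by apply/matrixP => i j; rewrite !mxE toC_conj.
have d_ge i : toC alpha <= spectral_diag A 0 i.
  have /mxOverP/(_ 0 i) d_real := hermitian_spectral_diag_real A_herm.
  have d_eq : toC (complex.Re (spectral_diag A 0 i)) = spectral_diag A 0 i.
    exact: RRe_real.
  rewrite -d_eq lecR; apply: alpha_min.
  rewrite -(eigenvalue_map toC) d_eq.
  exact/spectral_diag_eigenvalue/hermitian_normalmx.
rewrite -lecR; change (toC (alpha * \sum_i z i 0 ^+ 2) <= toC ((z^T *m S *m z) 0 0)).
rewrite rmorphM.
have -> : toC (\sum_i z i 0 ^+ 2) = (zc^t* *m zc) 0 0.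
  by rewrite zc_conj mxE rmorph_sum; apply: eq_bigr => i _; rewrite !mxE rmorphXn expr2.
have -> : toC ((z^T *m S *m z) 0 0) = (zc^t* *m A *m zc) 0 0.
  by rewrite zc_conj /zc /A map_trmx -!map_mxM [RHS]mxE.
exact: normalmx_form_ge (hermitian_normalmx A_herm) _ _ d_ge.
Qed.

Lemma tr_sympart (R : realType) n (M : 'M[R]_n) : (sympart M)^T = sympart M.
Proof. by rewrite /sympart linearZ /= linearD /= trmxK addrC. Qed.

Lemma form_sympart (R : realType) n (M : 'M[R]_n) (z : 'cV_n) :
  (z^T *m sympart M *m z) 0 0 = (z^T *m M *m z) 0 0.
Proof.
have form_tr : z^T *m M^T *m z = (z^T *m M *m z)^T.
  by rewrite !trmx_mul trmxK mulmxA.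
rewrite /sympart -scalemxAr -scalemxAl mulmxDr mulmxDl form_tr !mxE.
by field.
Qed.

Lemma form_diag_ge0 (R : realDomainType) n (c : 'rV[R]_n) (z : 'cV_n) :
  (forall i, 0 <= c 0 i) -> 0 <= (z^T *m diag_mx c *m z) 0 0.
Proof.
move=> c_ge0; rewrite mxE; apply: sumr_ge0 => i _.
by rewrite mul_mx_diag !mxE mulrAC mulr_ge0 ?c_ge0 // -expr2 sqr_ge0.
Qed.

Section DiffusionMatrix.
Variables (R : realType) (n : nat) (q r : 'M[R]_n) (u : 'I_n -> R).

Lemma ler_lin i : (forall i j, r i j <= q i j) -> (forall j, 0 <= u j) ->
  lin r u i <= lin q u i.
Proof. by move=> r_le_q u_ge0; apply: ler_sum => j _; rewrite ler_wpM2r. Qed.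

Lemma Amat_col_sum j : \sum_k Amat q r u k j
  = u0 u * (lin q u j - lin r u j + \sum_l u l * (q l j + r l j)).
Proof.
set X := lin q u j - lin r u j + _.
have -> : \sum_k Amat q r u k j = \sum_k
    ((lin q u k - lin r u k) * (k == j)%:R + u k * (q k j + r k j) - u k * X).
  by apply: eq_bigr => k _; rewrite mxE /X; ring.
rewrite !big_split /= sumrN -mulr_suml (bigD1 j) //= eqxx mulr1.
rewrite big1 ?addr0 => [|k /negbTE ->]; last by rewrite mulr0.
by rewrite /u0 /X; ring.
Qed.

Lemma hessB_mulmxE (M : 'M[R]_n) i j :
  (hessB u *m M) i j = M i j / u i + (\sum_k M k j) / u0 u.
Proof.
rewrite mxE; under eq_bigr do rewrite mxE mulrDl.
rewrite big_split /= -mulr_sumr mulrC (bigD1 i) //= eqxx big1 ?addr0.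
  by rewrite mul1r mulrC div1r.
by move=> k /negbTE; rewrite eq_sym => ->; rewrite !mul0r.
Qed.

Lemma hessB_mulmx_Amat : (forall i, u i != 0) -> u0 u != 0 ->
  hessB u *m Amat q r u
  = diag_mx (\row_i ((lin q u i - lin r u i) / u i)) + (q + r).
Proof.
move=> u_neq0 u0_neq0; apply/matrixP => i j.
rewrite hessB_mulmxE Amat_col_sum !mxE -mulr_natr.
by field; rewrite u_neq0 u0_neq0.
Qed.

End DiffusionMatrix.

Theorem lemma8 (R : realType) (n : nat) (hn : (0 < n)%N)
  (q r : 'M[R]_n) (alpha : R)
  (hq0 : forall i j, 0 <= q i j)
  (hr0 : forall i j, 0 <= r i j)
  (hrsym : forall i j, r i j = r j i)
  (hrdiag : forall i, r i i = 0)
  (hpd : forall z : 'cV[R]_n, z != 0 -> 0 < (z^T *m sympart (q + r) *m z) 0 0)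
  (halpha_eig : eigenvalue (sympart (q + r)) alpha)
  (halpha_min : forall a, eigenvalue (sympart (q + r)) a -> alpha <= a)
  (halpha_pos : 0 < alpha)
  (hqr : forall i j, r i j <= q i j) :
  forall (u : 'I_n -> R) (z : 'cV[R]_n), inD u ->
    alpha * \sum_(i < n) z i 0 ^+ 2 <= (z^T *m hessB u *m Amat q r u *m z) 0 0.
Proof.
move=> u z [u_bounds sum_u_lt1].
have u_gt0 i : 0 < u i := (u_bounds i).1.
have u_neq0 i : u i != 0 by rewrite gt_eqF.
have u0_neq0 : u0 u != 0 by rewrite gt_eqF ?subr_gt0.
rewrite -(mulmxA z^T) hessB_mulmx_Amat //.
rewrite mulmxDr mulmxDl mxE -(form_sympart (q + r)) -[X in X <= _]add0r.
apply: lerD; last exact: symmetric_form_ge (tr_sympart _) halpha_min z.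
apply: form_diag_ge0 => i; rewrite mxE divr_ge0 ?subr_ge0 ?(ltW (u_gt0 i)) //.
by apply: ler_lin => // j; exact: ltW (u_gt0 j).
Qed.
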